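(* Let $(G,\tau,\partial)$ be a Polish topometric group with the Steinhaus property. Then for any Polish topology $\tau'$ on $G$ such that $(G,\tau',\partial)$ is also a (Polish) topometric group, we have $\tau=\tau'$.
   Context: A topometric group is a triple $(G,\tau,\partial)$ with $(G,\tau)$ a topological group, $\partial$ a bi-invariant metric whose topology refines $\tau$ and which is $\tau$-lower semi-continuous ($\{(x,y)\colon\partial(x,y)\le r\}$ is $\tau$-closed for all $r$); it is Polish if $\tau$ is Polish. For $A\subseteq G$, $(A)_\varepsilon=\{g\colon\partial(g,A)<\varepsilon\}$. $A\subseteq G$ is $\sigma$-syndetic if $G$ is covered by countably many left translates of $A$. $(G,\tau,\partial)$ has the Steinhaus property if there is an integer $k$ such that for every symmetric $\sigma$-syndetic $A\subseteq G$ and every $\varepsilon>0$, $1_G\in\mathrm{Int}_\tau\big((A^k)_\varepsilon\big)$. *)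

(* concrete reals R. Topologies on a fixed carrier are given
   explicitly as families of open sets, since the statement compares two
   topologies on the same group. *)
From Stdlib Require Import Reals.
Open Scope R_scope.

Definition set (T : Type) := T -> Prop.

Record GroupStr (G : Type) := {
  gmul : G -> G -> G;
  ginv : G -> G;
  gone : G;
  gmulA : forall x y z, gmul x (gmul y z) = gmul (gmul x y) z;
  gmul1l : forall x, gmul gone x = x;
  gmul1r : forall x, gmul x gone = x;
  gmulVl : forall x, gmul (ginv x) x = gone;
  gmulVr : forall x, gmul x (ginv x) = gone }.
Arguments gmul {G}. Arguments ginv {G}. Arguments gone {G}.

Definition is_topology {G : Type} (tau : set (set G)) : Prop :=
  tau (fun _ => False) /\ tau (fun _ => True) /\
  (forall F : set (set G), (forall U, F U -> tau U) ->
      tau (fun x => exists U, F U /\ U x)) /\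
  (forall U V, tau U -> tau V -> tau (fun x => U x /\ V x)).

Definition prod_open {G : Type} (tau : set (set G)) (W : set (G * G)) : Prop :=
  forall p, W p -> exists A B, tau A /\ tau B /\ A (fst p) /\ B (snd p) /\
    (forall x y, A x -> B y -> W (x, y)).

Definition prod_closed {G : Type} (tau : set (set G)) (C : set (G * G)) : Prop :=
  prod_open tau (fun p => ~ C p).

Definition is_topological_group {G : Type} (grp : GroupStr G)
    (tau : set (set G)) : Prop :=
  is_topology tau /\
  (forall V, tau V -> prod_open tau (fun p => V (gmul grp (fst p) (snd p)))) /\
  (forall V, tau V -> tau (fun x => V (ginv grp x))).

Definition is_metric {G : Type} (d : G -> G -> R) : Prop :=
  (forall x y, 0 <= d x y) /\
  (forall x y, d x y = 0 <-> x = y) /\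
  (forall x y, d x y = d y x) /\
  (forall x y z, d x z <= d x y + d y z).

Definition metric_open {G : Type} (d : G -> G -> R) (U : set G) : Prop :=
  forall x, U x -> exists r, 0 < r /\ forall y, d x y < r -> U y.

Definition bi_invariant {G : Type} (grp : GroupStr G) (d : G -> G -> R) : Prop :=
  forall g x y, d (gmul grp g x) (gmul grp g y) = d x y /\
                d (gmul grp x g) (gmul grp y g) = d x y.

Definition is_topometric_group {G : Type} (grp : GroupStr G)
    (tau : set (set G)) (d : G -> G -> R) : Prop :=
  is_topological_group grp tau /\
  is_metric d /\ bi_invariant grp d /\
  (forall U, tau U -> metric_open d U) /\
  (* d is tau-lower semicontinuous *)
  (forall r : R, prod_closed tau (fun p => d (fst p) (snd p) <= r)).

Definition cauchy_seq {G : Type} (d : G -> G -> R) (u : nat -> G) : Prop :=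
  forall e, 0 < e -> exists N, forall m n, (N <= m)%nat -> (N <= n)%nat ->
    d (u m) (u n) < e.

Definition converges_to {G : Type} (d : G -> G -> R) (u : nat -> G) (x : G) : Prop :=
  forall e, 0 < e -> exists N, forall n, (N <= n)%nat -> d (u n) x < e.

Definition separable {G : Type} (tau : set (set G)) : Prop :=
  exists s : nat -> G, forall U, tau U -> (exists x, U x) -> exists n, U (s n).

Definition polish {G : Type} (tau : set (set G)) : Prop :=
  is_topology tau /\ separable tau /\
  exists d' : G -> G -> R, is_metric d' /\
    (forall U, tau U <-> metric_open d' U) /\
    (forall u, cauchy_seq d' u -> exists x, converges_to d' u x).

Definition sigma_syndetic {G : Type} (grp : GroupStr G) (A : set G) : Prop :=
  exists g : nat -> G, forall x, exists n a, A a /\ x = gmul grp (g n) a.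

Definition symmetric_set {G : Type} (grp : GroupStr G) (A : set G) : Prop :=
  forall x, A x -> A (ginv grp x).

(* A^1 = A, A^(k+1) = A^k A  (setpow grp A k = A^(k+1)) *)
Fixpoint setpow {G : Type} (grp : GroupStr G) (A : set G) (k : nat) : set G :=
  match k with
  | O => A
  | S k' => fun x => exists y a, setpow grp A k' y /\ A a /\ x = gmul grp y a
  end.

(* (A)_eps = { g | d(g, A) < eps }, d(g,A) = inf_{a in A} d(g,a) *)
Definition eps_nbhd {G : Type} (d : G -> G -> R) (A : set G) (eps : R) : set G :=
  fun g => exists a, A a /\ d g a < eps.

Definition in_interior {G : Type} (tau : set (set G)) (S : set G) (x : G) : Prop :=
  exists U, tau U /\ U x /\ forall y, U y -> S y.

(** Steinhaus property; k ranges over positive integers (A^k = setpow A (k-1)) *)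
Definition steinhaus {G : Type} (grp : GroupStr G) (tau : set (set G))
    (d : G -> G -> R) : Prop :=
  exists k : nat, (1 <= k)%nat /\
    forall A : set G, symmetric_set grp A -> sigma_syndetic grp A ->
      forall eps, 0 < eps ->
        in_interior tau (eps_nbhd d (setpow grp A (k - 1)) eps) (gone grp).

(* The Steinhaus property gives [tau' ⊆ tau]: a small symmetric [tau']-open
   [W] is σ-syndetic because [tau'] is separable, and [(W^k)_ε] stays inside a
   prescribed [tau']-neighbourhood of [1] because the [∂]-topology refines
   [tau'].  Conversely, two comparable Polish group topologies coincide: by
   Baire category in [tau'], the [tau']-closure of a [tau]-open set is a
   [tau']-neighbourhood of its points, and outside a [tau']-meagre set this
   closure adds nothing to small [tau]-balls [B]; hence every [B B^-1] with
   [B ∋ 1] contains a [tau']-neighbourhood of [1]. *)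

From Stdlib Require Import Reals Lra Lia ZArith Classical.
From Stdlib Require Import FunctionalExtensionality PropExtensionality ClassicalEpsilon Cantor.
Open Scope R_scope.

Arguments gmulA {G}. Arguments gmul1l {G}. Arguments gmul1r {G}.
Arguments gmulVl {G}. Arguments gmulVr {G}.

Section GroupFacts.
Variables (G : Type) (grp : GroupStr G).
Local Notation "x * y" := (gmul grp x y).
Local Notation "x ^-1" := (ginv grp x).
Local Notation "1" := (gone grp).

Lemma ginv_unique x y : x * y = 1 -> y = x^-1.
Proof.
  intro H. rewrite <- (gmul1l grp y), <- (gmulVl grp x), <- gmulA, H, gmul1r.
  reflexivity.
Qed.

Lemma ginvK x : (x^-1)^-1 = x.
Proof. symmetry; apply ginv_unique, gmulVl. Qed.

Lemma ginvM x y : (x * y)^-1 = y^-1 * x^-1.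
Proof.
  symmetry; apply ginv_unique.
  rewrite gmulA, <- (gmulA grp x y), gmulVr, gmul1r, gmulVr; reflexivity.
Qed.

Lemma ginv1 : 1^-1 = 1.
Proof. symmetry; apply ginv_unique, gmul1l. Qed.

Lemma gmulKg x y : x^-1 * (x * y) = y.
Proof. rewrite gmulA, gmulVl, gmul1l; reflexivity. Qed.

Lemma gmulVKg x y : x * (x^-1 * y) = y.
Proof. rewrite gmulA, gmulVr, gmul1l; reflexivity. Qed.

End GroupFacts.

Arguments ginvK {G}. Arguments ginvM {G}. Arguments ginv1 {G}.
Arguments gmulKg {G}. Arguments gmulVKg {G}.

Section Topology.
Variables (G : Type) (T : set (set G)).
Hypothesis HT : is_topology T.

Lemma open_of_local (S : set G) :
  (forall x, S x -> exists A, T A /\ A x /\ forall y, A y -> S y) -> T S.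
Proof.
  destruct HT as [_ [_ [Hunion _]]]. intro Hloc.
  assert (ES : S = fun x => exists U, (T U /\ forall y, U y -> S y) /\ U x).
  { apply functional_extensionality; intro x; apply propositional_extensionality.
    split.
    - intro Sx. destruct (Hloc x Sx) as [A [TA [Ax HA]]]. exists A; auto.
    - intros [U [[_ HU] Ux]]; auto. }
  rewrite ES. apply Hunion. intros U [TU _]; exact TU.
Qed.

Lemma open_inter (U V : set G) : T U -> T V -> T (fun x => U x /\ V x).
Proof. destruct HT as [_ [_ [_ Hinter]]]; apply Hinter. Qed.

Lemma open_full : T (fun _ => True).
Proof. destruct HT as [_ [Hfull _]]; exact Hfull. Qed.

End Topology.

Definition closure {G : Type} (T : set (set G)) (S : set G) : set G :=
  fun y => forall N, T N -> N y -> exists e, N e /\ S e.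

Definition dense {G : Type} (T : set (set G)) (S : set G) : Prop :=
  forall Q, T Q -> (exists q, Q q) -> exists y, Q y /\ S y.

Lemma not_closure {G : Type} (T : set (set G)) (S : set G) y :
  ~ closure T S y -> exists N, T N /\ N y /\ forall e, N e -> ~ S e.
Proof.
  intro Hy. apply NNPP. intro Hno. apply Hy. intros N TN Ny.
  apply NNPP. intro Hdisj. apply Hno. exists N. repeat split; auto.
  intros e Ne Se. apply Hdisj. exists e; auto.
Qed.

Section TopologicalGroup.
Variables (G : Type) (grp : GroupStr G) (T : set (set G)).
Hypothesis HT : is_topological_group grp T.
Local Notation "x * y" := (gmul grp x y).
Local Notation "x ^-1" := (ginv grp x).
Local Notation "1" := (gone grp).

Lemma tg_topology : is_topology T.
Proof. exact (proj1 HT). Qed.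

Lemma tg_mul_nbhds V a b : T V -> V (a * b) ->
  exists A B, T A /\ T B /\ A a /\ B b /\ forall x y, A x -> B y -> V (x * y).
Proof.
  destruct HT as [_ [Hmul _]]. intros TV Vab.
  destruct (Hmul V TV (a, b) Vab) as [A [B [TA [TB [Aa [Bb H]]]]]].
  exists A, B; repeat split; auto.
Qed.

Lemma tg_mul_nbhds1 V : T V -> V 1 ->
  exists A B, T A /\ T B /\ A 1 /\ B 1 /\ forall x y, A x -> B y -> V (x * y).
Proof. intros TV V1. apply tg_mul_nbhds; [exact TV|]. rewrite gmul1l; exact V1. Qed.

Lemma open_inv V : T V -> T (fun x => V x^-1).
Proof. destruct HT as [_ [_ Hinv]]; apply Hinv. Qed.

Lemma open_translateL V g : T V -> T (fun x => V (g * x)).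
Proof.
  intro TV. apply open_of_local; [exact tg_topology|]. intros x Vx.
  destruct (tg_mul_nbhds V g x TV Vx) as [A [B [_ [TB [Ag [Bx H]]]]]].
  exists B; repeat split; auto.
Qed.

Lemma open_translateR V g : T V -> T (fun x => V (x * g)).
Proof.
  intro TV. apply open_of_local; [exact tg_topology|]. intros x Vx.
  destruct (tg_mul_nbhds V x g TV Vx) as [A [B [TA [_ [Ax [Bg H]]]]]].
  exists A; repeat split; auto.
Qed.

End TopologicalGroup.

Lemma open_of_nbhd1 {G : Type} (grp : GroupStr G) (T : set (set G)) V :
  is_topological_group grp T ->
  (forall x, V x -> exists U, T U /\ U (gone grp) /\ forall y, U y -> V (gmul grp x y)) -> T V.
Proof.
  intros HT Hloc. apply open_of_local; [exact (proj1 HT)|]. intros x Vx.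
  destruct (Hloc x Vx) as [U [TU [U1 HU]]].
  exists (fun w => U (gmul grp (ginv grp x) w)). repeat split.
  - exact (open_translateL _ _ _ HT _ _ TU).
  - rewrite gmulVl; exact U1.
  - intros w Uw. rewrite <- (gmulVKg grp x w). apply HU, Uw.
Qed.


Definition metrizes {G : Type} (d : G -> G -> R) (T : set (set G)) : Prop :=
  forall U, T U <-> metric_open d U.

Definition complete_metric {G : Type} (d : G -> G -> R) : Prop :=
  forall u, cauchy_seq d u -> exists x, converges_to d u x.

Definition dense_seq {G : Type} (T : set (set G)) (s : nat -> G) : Prop :=
  forall U, T U -> (exists x, U x) -> exists n, U (s n).

Lemma le_of_lt_add (a b : R) : (forall e, 0 < e -> a < b + e) -> a <= b.
Proof.
  intro H. destruct (Rle_or_lt a b) as [h|h]; auto.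
  specialize (H ((a - b) / 2)). lra.
Qed.

Lemma inv_succ_pos n : 0 < / (INR n + 1).
Proof. apply Rinv_0_lt_compat; pose proof (pos_INR n); lra. Qed.

Lemma inv_succ_le n m : (n <= m)%nat -> / (INR m + 1) <= / (INR n + 1).
Proof.
  intro h. apply Rinv_le_contravar; [pose proof (pos_INR n); lra|].
  apply le_INR in h; lra.
Qed.

Lemma inv_succ_small e : 0 < e -> exists N, forall n, (N <= n)%nat -> / (INR n + 1) < e.
Proof.
  intro He. destruct (archimed (/ e)) as [Hup _].
  pose proof (Rinv_0_lt_compat e He) as Hie.
  exists (Z.to_nat (up (/ e))). intros n Hn.
  apply le_INR in Hn. rewrite INR_IZR_INZ, Z2Nat.id in Hn by (apply le_IZR; lra).
  rewrite <- (Rinv_inv e). apply Rinv_lt_contravar; [|lra].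
  apply Rmult_lt_0_compat; lra.
Qed.

Section Metric.
Variables (G : Type) (d : G -> G -> R).
Hypothesis Hd : is_metric d.

Lemma dist_ge0 x y : 0 <= d x y.
Proof. apply (proj1 Hd). Qed.

Lemma dist_eq0 x y : d x y = 0 -> x = y.
Proof. apply (proj1 (proj2 Hd)). Qed.

Lemma dist_refl x : d x x = 0.
Proof. apply (proj1 (proj2 Hd)); reflexivity. Qed.

Lemma dist_sym x y : d x y = d y x.
Proof. apply (proj1 (proj2 (proj2 Hd))). Qed.

Lemma dist_triangle x y z : d x z <= d x y + d y z.
Proof. apply (proj2 (proj2 (proj2 Hd))). Qed.

Lemma ball_metric_open c r : metric_open d (fun y => d c y < r).
Proof.
  intros x Hx. exists (r - d c x). split; [lra|].
  intros y Hy. pose proof (dist_triangle c x y). lra.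
Qed.

Lemma ball_center c r : 0 < r -> d c c < r.
Proof. rewrite dist_refl; auto. Qed.

Lemma complete_nested_balls (c : nat -> G) (r : nat -> R) :
  complete_metric d -> (forall n, 0 < r n) ->
  (forall e, 0 < e -> exists N, forall n, (N <= n)%nat -> r n < e) ->
  (forall n w, d (c (S n)) w <= r (S n) -> d (c n) w < r n) ->
  exists x, forall n, d (c n) x < r n.
Proof.
  intros Hc Hr Hr0 Hnest.
  assert (Hiter : forall k n w, d (c (k + n)%nat) w <= r (k + n)%nat -> d (c n) w <= r n).
  { induction k as [|k IH]; intros n w H; [exact H|].
    apply IH, Rlt_le, Hnest. replace (S (k + n)) with (S k + n)%nat by lia. exact H. }
  assert (Hcenters : forall n m, (n <= m)%nat -> d (c n) (c m) < r n).
  { intros n m Hnm. destruct (Nat.eq_dec n m) as [->|ne]; [apply ball_center, Hr|].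
    apply Hnest, (Hiter (m - S n)%nat). replace (m - S n + S n)%nat with m by lia.
    rewrite dist_refl. apply Rlt_le, Hr. }
  destruct (Hc c) as [x Hx].
  { intros e He. destruct (Hr0 e He) as [N HN]. exists N. intros m n Hm Hn.
    destruct (Nat.le_ge_cases m n) as [h|h].
    - specialize (Hcenters m n h). specialize (HN m Hm). lra.
    - specialize (Hcenters n m h). specialize (HN n Hn). rewrite dist_sym. lra. }
  exists x. intro n. apply Hnest, le_of_lt_add. intros e He.
  destruct (Hx e He) as [N HN]. pose (m := Nat.max (S n) N).
  pose proof (Hcenters (S n) m (Nat.le_max_l _ _)). pose proof (HN m (Nat.le_max_r _ _)).
  pose proof (dist_triangle (c (S n)) (c m) x). lra.
Qed.

End Metric.

Section Baire.
Variables (G : Type) (T : set (set G)) (d : G -> G -> R).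
Hypotheses (HT : is_topology T) (Hd : is_metric d) (HTd : metrizes d T)
  (Hc : complete_metric d).

Lemma ball_open c r : T (fun y => d c y < r).
Proof. apply HTd, ball_metric_open, Hd. Qed.

Lemma baire_category (Gs : nat -> set G) (Q : set G) :
  (forall n, T (Gs n) /\ dense T (Gs n)) -> T Q -> (exists q, Q q) ->
  exists z, Q z /\ forall n, Gs n z.
Proof.
  intros HG TQ [q Qq].
  assert (step : forall n (p : G * R), exists p' : G * R,
     0 < snd p -> 0 < snd p' /\ snd p' <= / (INR n + 1) /\
       forall w, d (fst p') w <= snd p' -> d (fst p) w < snd p /\ Gs n w).
  { intros n [c r]. simpl.
    destruct (classic (0 < r)) as [hr|hr]; [|exists (c, r); intro; contradiction].
    destruct (HG n) as [TGn DGn].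
    destruct (DGn (fun y => d c y < r)) as [y [Hy Gy]];
      [apply ball_open | exists c; apply ball_center; auto|].
    assert (TI : T (fun w => d c w < r /\ Gs n w)) by (apply open_inter; auto; apply ball_open).
    apply HTd in TI. destruct (TI y (conj Hy Gy)) as [rho [Hrho Hin]].
    exists (y, Rmin (rho / 2) (/ (INR n + 1))). simpl. intros _.
    pose proof (inv_succ_pos n). pose proof (Rmin_l (rho / 2) (/ (INR n + 1))).
    split; [|split].
    - apply Rmin_glb_lt; lra.
    - apply Rmin_r.
    - intros w Hw. apply Hin. lra. }
  pose (f n p := proj1_sig (constructive_indefinite_description _ (step n p))).
  assert (Hf : forall n p, 0 < snd p -> 0 < snd (f n p) /\ snd (f n p) <= / (INR n + 1) /\
       forall w, d (fst (f n p)) w <= snd (f n p) -> d (fst p) w < snd p /\ Gs n w)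
    by (intros n p; exact (proj2_sig (constructive_indefinite_description _ (step n p)))).
  clearbody f.
  apply HTd in TQ. destruct (TQ q Qq) as [rho [Hrho Hin]].
  pose (ps := fix ps n := match n with O => (q, rho / 2) | S n => f n (ps n) end).
  assert (Hpos : forall n, 0 < snd (ps n)).
  { induction n as [|n IH]; simpl; [lra|]. apply (Hf n (ps n) IH). }
  destruct (complete_nested_balls G d Hd (fun n => fst (ps (S n))) (fun n => snd (ps (S n))))
    as [x Hx]; auto.
  - intros e He. destruct (inv_succ_small e He) as [N HN]. exists N. intros n Hn.
    simpl. destruct (Hf n (ps n) (Hpos n)) as [_ [h _]]. pose proof (HN n Hn). lra.
  - intros n w Hw. apply (Hf (S n) (ps (S n)) (Hpos (S n))), Hw.
  - exists x. split.
    + destruct (Hf O (ps O) (Hpos O)) as [_ [_ H]].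
      destruct (H x (Rlt_le _ _ (Hx O))) as [H1 _]. simpl in H1. apply Hin. lra.
    + intro n. destruct (Hf n (ps n) (Hpos n)) as [_ [_ H]]. apply (H x (Rlt_le _ _ (Hx n))).
Qed.

Lemma baire_cover (S : nat -> set G) (x0 : G) : (forall x, exists n, S n x) ->
  exists n Q q, T Q /\ Q q /\ forall y, Q y -> closure T (S n) y.
Proof.
  intros Hcov. apply NNPP. intro Hno.
  pose (Gs n y := exists N, T N /\ N y /\ forall e, N e -> ~ S n e).
  destruct (baire_category Gs (fun _ => True)) as [z [_ Hz]].
  - intro n. split.
    + apply open_of_local; auto. intros y [N [TN [Ny HN]]].
      exists N. split; [exact TN|split; [exact Ny|]]. intros y' Ny'. exists N; auto.
    + intros Q TQ [q Qq]. apply NNPP. intro Hn. apply Hno. exists n, Q, q.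
      split; [exact TQ|split; [exact Qq|]]. intros y Qy. apply NNPP. intro Hcl.
      apply Hn. exists y. split; auto. apply not_closure; auto.
  - apply open_full; auto.
  - exists x0; auto.
  - destruct (Hcov z) as [n Sz]. destruct (Hz n) as [N [_ [Nz HN]]]. exact (HN z Nz Sz).
Qed.

End Baire.

Lemma setpow_mono {G : Type} (grp : GroupStr G) (A B : set G) m x :
  (forall y, A y -> B y) -> setpow grp A m x -> setpow grp B m x.
Proof.
  intro HAB. revert x. induction m as [|m IH]; simpl; auto.
  intros x [y [a [Hy [Ha ->]]]]. exists y, a; auto.
Qed.

Section SymmetricNeighbourhoods.
Variables (G : Type) (grp : GroupStr G) (T : set (set G)).
Hypothesis HT : is_topological_group grp T.
Local Notation "1" := (gone grp).

Lemma symmetric_nbhd_setpow m U : T U -> U 1 ->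
  exists W, T W /\ W 1 /\ symmetric_set grp W /\ forall x, setpow grp W m x -> U x.
Proof.
  pose proof (tg_topology _ _ _ HT) as Ht. revert U.
  induction m as [|m IH]; intros U TU U1.
  - exists (fun x => U x /\ U (ginv grp x)). split; [|split; [|split]].
    + apply open_inter; auto. apply open_inv; auto.
    + split; [|rewrite ginv1]; auto.
    + intros x [h1 h2]. rewrite ginvK. auto.
    + intros x [h _]; exact h.
  - destruct (tg_mul_nbhds1 _ _ _ HT U TU U1) as [A [B [TA [TB [A1 [B1 HAB]]]]]].
    destruct (IH A TA A1) as [W [TW [W1 [SW HW]]]].
    exists (fun x => W x /\ B x /\ B (ginv grp x)). split; [|split; [|split]].
    + apply open_inter; auto. apply open_inter; auto. apply open_inv; auto.
    + rewrite ginv1; auto.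
    + intros x [h1 [h2 h3]]. rewrite ginvK. auto.
    + intros x [y [a [Hy [Ha ->]]]]. apply HAB; [|apply Ha].
      apply HW. eapply setpow_mono; [|exact Hy]. intros z [h _]; exact h.
Qed.

Lemma open_nbhd1_sigma_syndetic W : separable T -> T W -> W 1 -> sigma_syndetic grp W.
Proof.
  intros [s Hs] TW W1. exists s. intro x.
  destruct (Hs (fun w => W (gmul grp (ginv grp w) x))) as [n Hn].
  - apply (open_inv _ _ _ HT (fun v => W (gmul grp v x))), open_translateR; auto.
  - exists x. rewrite gmulVl; auto.
  - exists n, (gmul grp (ginv grp (s n)) x). split; auto. rewrite gmulVKg; auto.
Qed.

End SymmetricNeighbourhoods.

Section SteinhausCoarser.
Variables (G : Type) (grp : GroupStr G) (tau tau' : set (set G)) (d : G -> G -> R).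
Hypotheses (Hd : is_metric d) (Hbi : bi_invariant grp d) (Hst : steinhaus grp tau d).
Hypotheses (HT' : is_topological_group grp tau') (Hsep' : separable tau')
  (Href' : forall U, tau' U -> metric_open d U).
Local Notation "x * y" := (gmul grp x y).
Local Notation "x ^-1" := (ginv grp x).
Local Notation "1" := (gone grp).

(* With [V'] small enough that [V' V' ⊆ V], take a symmetric [W] with
   [W^k ⊆ V'] and [r] with [B_d(1, r) ⊆ V']; by left invariance
   [(W^k)_r ⊆ W^k B_d(1, r) ⊆ V], and [(W^k)_r] is a [tau]-neighbourhood of [1]
   by the Steinhaus property, [W] being σ-syndetic as [tau'] is separable. *)
Lemma steinhaus_nbhd1 V : tau' V -> V 1 -> exists U, tau U /\ U 1 /\ forall y, U y -> V y.
Proof.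
  intros TV V1. destruct Hst as [k [_ HS]].
  destruct (tg_mul_nbhds1 _ _ _ HT' V TV V1) as [A [B [TA [TB [A1 [B1 HAB]]]]]].
  pose (V' := fun w => A w /\ B w).
  assert (TV' : tau' V') by (apply open_inter; auto; exact (tg_topology _ _ _ HT')).
  destruct (Href' V' TV' 1 (conj A1 B1)) as [r [Hr Hball]].
  destruct (symmetric_nbhd_setpow _ _ _ HT' (k - 1) V' TV' (conj A1 B1))
    as [W [TW [W1 [SW HW]]]].
  destruct (HS W SW (open_nbhd1_sigma_syndetic _ _ _ HT' W Hsep' TW W1) r Hr)
    as [U [TU [U1 HU]]].
  exists U. split; [exact TU|split; [exact U1|]]. intros y Uy.
  destruct (HU y Uy) as [a [Ha Hda]].
  assert (Hv : V' (a^-1 * y)).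
  { apply Hball. destruct (Hbi a^-1 a y) as [Hinv _].
    rewrite gmulVl in Hinv. rewrite Hinv, dist_sym; auto. }
  rewrite <- (gmulVKg grp a y). apply HAB; [apply (HW a Ha) | apply Hv].
Qed.

Lemma steinhaus_coarser : is_topological_group grp tau -> forall V, tau' V -> tau V.
Proof.
  intros HT V TV. apply (open_of_nbhd1 grp tau); [exact HT|]. intros x Vx.
  apply steinhaus_nbhd1; [exact (open_translateL _ _ _ HT' V x TV) | rewrite gmul1r; exact Vx].
Qed.

End SteinhausCoarser.

(* No comparability of [tau] and [tau'] is needed here. *)
Section ClosureOfOpen.
Variables (G : Type) (grp : GroupStr G) (tau tau' : set (set G)) (d' : G -> G -> R).
Hypotheses (HT : is_topological_group grp tau) (Hsep : separable tau).
Hypotheses (HT' : is_topological_group grp tau') (Hd' : is_metric d')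
  (HTd' : metrizes d' tau') (Hc' : complete_metric d').
Local Notation "x * y" := (gmul grp x y).
Local Notation "x ^-1" := (ginv grp x).
Local Notation "1" := (gone grp).

(* Choose [V] with [x V^-1 V ⊆ E]; by Baire some translate [s_n V] has a
   [tau']-closure with interior point [q], and [x q^-1] moves [q] to [x]. *)
Lemma closure_open_nbhd E x : tau E -> E x ->
  exists Q, tau' Q /\ Q x /\ forall y, Q y -> closure tau' E y.
Proof.
  intros TE Ex. pose proof (tg_topology _ _ _ HT) as Ht.
  pose proof (tg_topology _ _ _ HT') as Ht'.
  destruct (tg_mul_nbhds1 _ _ _ HT (fun w => E (x * w))) as [A [B [TA [TB [A1 [B1 HAB]]]]]].
  { apply open_translateL; auto. }
  { rewrite gmul1r; exact Ex. }
  pose (V v := A v^-1 /\ B v).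
  assert (TV : tau V) by (apply open_inter; auto; apply open_inv; auto).
  assert (V1 : V 1) by (split; [rewrite ginv1|]; auto).
  destruct (open_nbhd1_sigma_syndetic _ _ _ HT V Hsep TV V1) as [s Hs].
  destruct (baire_cover G tau' d' Ht' Hd' HTd' Hc' (fun n e => exists v, V v /\ e = s n * v) x)
    as [n [Q [q [TQ [Qq HQ]]]]].
  { intro y. destruct (Hs y) as [n [v [Vv ->]]]. exists n, v; auto. }
  exists (fun w => Q (q * (x^-1 * w))). split; [|split].
  - apply (open_translateL _ _ _ HT' (fun w => Q (q * w))), open_translateL; auto.
  - rewrite gmulVl, gmul1r; exact Qq.
  - intros w Qw N TN Nw. set (t := x^-1 * w) in *.
    destruct (tg_mul_nbhds _ _ _ HT' (fun c => N (x * c)) q^-1 (q * t))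
      as [A' [B' [TA' [TB' [A'q [B'q HA'B']]]]]].
    { apply open_translateL; auto. }
    { rewrite gmulKg. unfold t. rewrite gmulVKg; exact Nw. }
    destruct (HQ q Qq (fun a => A' a^-1)) as [e1 [Ae1 [v1 [Vv1 ->]]]];
      [apply open_inv; auto | exact A'q |].
    destruct (HQ _ Qw B' TB' B'q) as [e2 [Be2 [v2 [Vv2 ->]]]].
    pose proof (HA'B' _ _ Ae1 Be2) as H. simpl in H.
    rewrite ginvM, <- gmulA, gmulKg in H.
    exists (x * (v1^-1 * v2)). split; [exact H|]. apply HAB; [apply Vv1 | apply Vv2].
Qed.

End ClosureOfOpen.

Section ComparablePolishGroupTopologies.
Variables (G : Type) (grp : GroupStr G) (tau tau' : set (set G)).
Variables (d d' : G -> G -> R) (s : nat -> G).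
Hypotheses (HT : is_topological_group grp tau) (Hd : is_metric d) (HTd : metrizes d tau)
  (Hc : complete_metric d) (Hs : dense_seq tau s).
Hypotheses (HT' : is_topological_group grp tau') (Hd' : is_metric d')
  (HTd' : metrizes d' tau') (Hc' : complete_metric d').
Hypothesis Hcoarser : forall V, tau' V -> tau V.
Local Notation "x * y" := (gmul grp x y).
Local Notation "x ^-1" := (ginv grp x).
Local Notation "1" := (gone grp).

(* The code [(i, j)] stands for the [d]-ball of radius [1/(j+1)] around [s i]. *)
Definition radius (c : nat * nat) : R := / (INR (snd c) + 1).

Definition ball_at (c : nat * nat) : set G := fun y => d (s (fst c)) y < radius c.

Definition child (c c' : nat * nat) : Prop :=
  (snd c < snd c')%nat /\ d (s (fst c)) (s (fst c')) + radius c' < radius c.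

(* Outside a [tau']-meagre set, [z] lies either off the [tau']-closure of
   [ball_at c] or in the [tau']-interior of the closure of a child ball. *)
Definition good (c : nat * nat) (z : G) : Prop :=
  (exists c', child c c' /\
     exists Q, tau' Q /\ Q z /\ forall y, Q y -> closure tau' (ball_at c') y) \/
  (exists N, tau' N /\ N z /\ forall e, N e -> ~ ball_at c e).

Lemma ball_at_open c : tau (ball_at c).
Proof. apply (ball_open G tau d Hd HTd). Qed.

Lemma child_ball c c' w : child c c' -> d (s (fst c')) w <= radius c' -> ball_at c w.
Proof.
  intros [_ Hc''] Hw. unfold ball_at.
  pose proof (dist_triangle G d Hd (s (fst c)) (s (fst c')) w). lra.
Qed.

Lemma ball_at_refine c y : ball_at c y -> exists c', child c c' /\ ball_at c' y.
Proof.
  destruct c as [i j]. unfold ball_at, radius; simpl. intro Hy.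
  set (eta := / (INR j + 1) - d (s i) y).
  destruct (inv_succ_small (eta / 3)) as [N HN]; [unfold eta; lra|].
  pose (j' := (N + j + 1)%nat).
  assert (Hr' : / (INR j' + 1) < eta / 3) by (apply HN; unfold j'; lia).
  destruct (Hs (fun w => d y w < / (INR j' + 1))) as [i' Hi'].
  { apply (ball_open G tau d Hd HTd). }
  { exists y. apply ball_center, inv_succ_pos; auto. }
  exists (i', j'). unfold child, ball_at, radius; simpl. split; [split|].
  - unfold j'; lia.
  - pose proof (dist_triangle G d Hd (s i) y (s i')). unfold eta in *. lra.
  - rewrite dist_sym; auto.
Qed.

Lemma good_open c : tau' (good c).
Proof.
  apply open_of_local; [exact (tg_topology _ _ _ HT')|].
  intros z [[c' [Hc'' [Q [TQ [Qz HQ]]]]] | [N [TN [Nz HN]]]].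
  - exists Q. split; [exact TQ|split; [exact Qz|]].
    intros y Qy. left. exists c'. split; [exact Hc''|]. exists Q; auto.
  - exists N. split; [exact TN|split; [exact Nz|]].
    intros y Ny. right. exists N; auto.
Qed.

Lemma good_dense c : dense tau' (good c).
Proof.
  intros Q TQ [q Qq].
  destruct (classic (exists y, Q y /\ exists N, tau' N /\ N y /\ forall e, N e -> ~ ball_at c e))
    as [[y [Qy Hy]] | Hno].
  - exists y. split; [exact Qy|right; exact Hy].
  - assert (Hcl : closure tau' (ball_at c) q).
    { apply NNPP. intro Hn. apply Hno. exists q. split; [exact Qq|]. apply not_closure, Hn. }
    destruct (Hcl Q TQ Qq) as [e [Qe Be]].
    destruct (ball_at_refine c e Be) as [c' [Hc'' Be']].
    destruct (closure_open_nbhd G grp tau tau' d' HT (ex_intro _ s Hs) HT' Hd' HTd' Hc'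
                (ball_at c') e (ball_at_open c') Be') as [Q' HQ'].
    exists e. split; [exact Qe|]. left. exists c'. split; [exact Hc''|]. exists Q'; exact HQ'.
Qed.

Lemma closure_chain z c0 : (forall c, good c z) -> closure tau' (ball_at c0) z ->
  exists cs : nat -> nat * nat, cs O = c0 /\
    forall n, child (cs n) (cs (S n)) /\ closure tau' (ball_at (cs n)) z.
Proof.
  intros Hz Hcl0.
  assert (Hstep : forall c, exists c',
             closure tau' (ball_at c) z -> child c c' /\ closure tau' (ball_at c') z).
  { intro c. destruct (classic (closure tau' (ball_at c) z)) as [Hcl|Hcl];
      [|exists c; intro; contradiction].
    destruct (Hz c) as [[c' [Hc'' [Q [TQ [Qz HQ]]]]] | [N [TN [Nz HN]]]].
    - exists c'. intros _. split; [exact Hc''|]. apply HQ, Qz.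
    - exfalso. destruct (Hcl N TN Nz) as [e [Ne Be]]. exact (HN e Ne Be). }
  destruct (choice _ Hstep) as [f Hf].
  pose (cs := fix cs n := match n with O => c0 | S n => f (cs n) end).
  assert (Hcl : forall n, closure tau' (ball_at (cs n)) z).
  { induction n as [|n IH]; [exact Hcl0|]. apply (Hf (cs n) IH). }
  exists cs. split; [reflexivity|]. intro n. split; [apply (Hf (cs n) (Hcl n))|apply Hcl].
Qed.

Section Chain.
Variable cs : nat -> nat * nat.
Hypothesis Hchain : forall n, child (cs n) (cs (S n)).

Lemma chain_radius_le n : radius (cs n) <= / (INR n + 1).
Proof.
  apply inv_succ_le.
  induction n as [|n IH]; [lia|]. destruct (Hchain n) as [Hlt _]. lia.
Qed.

Lemma chain_radius_small e : 0 < e -> exists N, forall n, (N <= n)%nat -> radius (cs n) < e.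
Proof.
  intro He. destruct (inv_succ_small e He) as [N HN]. exists N. intros n Hn.
  eapply Rle_lt_trans; [apply chain_radius_le|apply HN, Hn].
Qed.

Lemma chain_limit : exists x, forall n, ball_at (cs n) x.
Proof.
  apply (complete_nested_balls G d Hd (fun n => s (fst (cs n))) (fun n => radius (cs n)) Hc).
  - intro n. apply inv_succ_pos.
  - exact chain_radius_small.
  - intros n w Hw. apply (child_ball _ _ _ (Hchain n) Hw).
Qed.

(* The [d']-ball of radius [δ/2] around [x] is [tau]-open, hence contains a
   small [d]-ball around [x], which contains a whole ball of the chain. *)
Lemma chain_closure_limit_eq x z : (forall n, ball_at (cs n) x) ->
  (forall n, closure tau' (ball_at (cs n)) z) -> z = x.
Proof.
  intros Hx Hz. apply (dist_eq0 G d' Hd').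
  apply Rle_antisym; [|apply dist_ge0; auto].
  apply le_of_lt_add. intros del Hdel. rewrite Rplus_0_l.
  assert (TB : tau (fun y => d' x y < del / 2))
    by (apply Hcoarser, (ball_open G tau' d' Hd' HTd')).
  apply HTd in TB. destruct (TB x) as [rho [Hrho Hin]]; [apply ball_center; auto; lra|].
  destruct (chain_radius_small (rho / 2)) as [N HN]; [lra|].
  destruct (Hz N (fun y => d' z y < del / 2)) as [e [He1 He2]].
  { apply (ball_open G tau' d' Hd' HTd'). }
  { apply ball_center; auto; lra. }
  pose proof (HN N (le_n N)). pose proof (Hx N) as HxN. unfold ball_at in *.
  pose proof (dist_triangle G d Hd x (s (fst (cs N))) e) as T1.
  rewrite (dist_sym G d Hd x (s (fst (cs N)))) in T1.
  assert (T2 : d' x e < del / 2) by (apply Hin; lra).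
  pose proof (dist_triangle G d' Hd' z e x) as T3. rewrite (dist_sym G d' Hd' e x) in T3.
  lra.
Qed.

End Chain.

Lemma good_closure_ball z c : (forall c', good c' z) -> closure tau' (ball_at c) z ->
  ball_at c z.
Proof.
  intros Hz Hcl. destruct (closure_chain z c Hz Hcl) as [cs [Hcs0 Hcs]].
  assert (Hchain : forall n, child (cs n) (cs (S n))) by (intro n; apply Hcs).
  destruct (chain_limit cs Hchain) as [x Hx].
  rewrite (chain_closure_limit_eq cs Hchain x z Hx (fun n => proj2 (Hcs n))), <- Hcs0.
  apply Hx.
Qed.

(* A Baire-generic [w] in [Q ∩ yQ] satisfies [good] everywhere, together with
   [y^-1 w]. *)
Lemma closure_ball_difference c Q y : tau' Q -> (forall z, Q z -> closure tau' (ball_at c) z) ->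
  Q y -> Q 1 -> exists w, ball_at c w /\ ball_at c (y^-1 * w).
Proof.
  intros TQ HQ Qy Q1. pose proof (tg_topology _ _ _ HT') as Ht'.
  pose (Gs n w := good (Cantor.of_nat n) w /\ good (Cantor.of_nat n) (y^-1 * w)).
  destruct (baire_category G tau' d' Ht' Hd' HTd' Hc' Gs (fun w => Q w /\ Q (y^-1 * w)))
    as [w [[Qw Qw'] Hw]].
  - intro n. split.
    + apply open_inter; [exact Ht'|apply good_open|].
      exact (open_translateL _ _ _ HT' _ _ (good_open _)).
    + intros P TP [p Pp].
      destruct (good_dense (Cantor.of_nat n) P TP (ex_intro _ p Pp)) as [w1 [Pw1 Gw1]].
      destruct (good_dense (Cantor.of_nat n) (fun u => P (y * u) /\ good (Cantor.of_nat n) (y * u)))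
        as [u [[Pu Gu] Gu']].
      { exact (open_translateL _ _ _ HT' (fun v => P v /\ good (Cantor.of_nat n) v) y
                 (open_inter _ _ Ht' _ _ TP (good_open _))). }
      { exists (y^-1 * w1). rewrite gmulVKg. split; auto. }
      exists (y * u). split; [exact Pu|]. split; [exact Gu|]. rewrite gmulKg; exact Gu'.
    - exact (open_inter _ _ Ht' _ _ TQ (open_translateL _ _ _ HT' _ _ TQ)).
    - exists y. rewrite gmulVl. split; auto.
    - assert (Hall : forall c' z, (forall n, good (Cantor.of_nat n) z) -> good c' z).
      { intros c' z H. rewrite <- (Cantor.cancel_of_to c'). apply H. }
      exists w. split; apply good_closure_ball; try apply HQ; auto;
        intro c'; apply Hall; intro n; apply (Hw n).
Qed.

Lemma finer_polish_nbhd1 V : tau V -> V 1 -> exists U, tau' U /\ U 1 /\ forall y, U y -> V y.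
Proof.
  intros TV V1.
  destruct (tg_mul_nbhds1 _ _ _ HT V TV V1) as [A [B [TA [TB [A1 [B1 HAB]]]]]].
  pose (W v := A v /\ B v^-1).
  assert (TW : tau W).
  { apply open_inter; [exact (tg_topology _ _ _ HT)|exact TA|]. apply open_inv; auto. }
  assert (W1 : W 1) by (split; [|rewrite ginv1]; auto).
  apply HTd in TW. destruct (TW _ W1) as [rho [Hrho HW]].
  destruct (inv_succ_small (rho / 2)) as [N HN]; [lra|].
  destruct (Hs (fun w => d 1 w < / (INR N + 1))) as [i Hi].
  { apply (ball_open G tau d Hd HTd). }
  { exists 1. apply ball_center, inv_succ_pos; auto. }
  assert (HDW : forall y, ball_at (i, N) y -> W y).
  { intros y Hy. apply HW. unfold ball_at, radius in Hy; simpl in Hy.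
    pose proof (dist_triangle G d Hd 1 (s i) y). pose proof (HN N (le_n N)). lra. }
  assert (D1 : ball_at (i, N) 1) by (unfold ball_at, radius; simpl; rewrite dist_sym; auto).
  destruct (closure_open_nbhd G grp tau tau' d' HT (ex_intro _ s Hs) HT' Hd' HTd' Hc'
              (ball_at (i, N)) 1 (ball_at_open (i, N)) D1) as [Q [TQ [Q1 HQ]]].
  exists Q. split; [exact TQ|split; [exact Q1|]]. intros y Qy.
  destruct (closure_ball_difference (i, N) Q y TQ HQ Qy Q1) as [w [Dw Dw']].
  apply HDW in Dw, Dw'.
  pose proof (HAB _ _ (proj1 Dw) (proj2 Dw')) as H.
  rewrite ginvM, ginvK, gmulVKg in H. exact H.
Qed.

Lemma finer_polish_group_topology V : tau V -> tau' V.
Proof.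
  intro TV. apply (open_of_nbhd1 grp tau'); [exact HT'|]. intros x Vx.
  apply finer_polish_nbhd1; [exact (open_translateL _ _ _ HT V x TV) | rewrite gmul1r; exact Vx].
Qed.

End ComparablePolishGroupTopologies.

Theorem corollary4p4 (G : Type) (grp : GroupStr G) (tau : set (set G))
    (d : G -> G -> R) :
  is_topometric_group grp tau d -> polish tau -> steinhaus grp tau d ->
  forall tau' : set (set G),
    is_topometric_group grp tau' d -> polish tau' ->
    forall U : set G, tau U <-> tau' U.
Proof.
  intros [HT [Hd [Hbi _]]] [_ [[s Hs] [d1 [Hd1 [HTd1 Hc1]]]]] Hst tau'
         [HT' [_ [_ [Href' _]]]] [_ [Hsep' [d2 [Hd2 [HTd2 Hc2]]]]] U.
  assert (Hcoarser : forall V, tau' V -> tau V)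
    by exact (steinhaus_coarser G grp tau tau' d Hd Hbi Hst HT' Hsep' Href' HT).
  split; [|apply Hcoarser].
  exact (finer_polish_group_topology G grp tau tau' d1 d2 s HT Hd1 HTd1 Hc1 Hs
           HT' Hd2 HTd2 Hc2 Hcoarser U).
Qed.
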